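(* Up to isomorphism, there are exactly five Frobenius objects in $\mathbf{Rel}$ whose underlying set has two elements. Writing the set as $X=\{a,b\}$, they are (pairwise non-isomorphic): (1) $\eta=\{a\}$, $\varepsilon=\{a\}$, $\tilde\mu(a,a)=\{a\}$, $\tilde\mu(a,b)=\tilde\mu(b,a)=\{b\}$, $\tilde\mu(b,b)=\{a\}$; (2) $\eta=\{a\}$, $\varepsilon=\{a\}$, $\tilde\mu(a,a)=\{a\}$, $\tilde\mu(a,b)=\tilde\mu(b,a)=\{b\}$, $\tilde\mu(b,b)=\{a,b\}$; (3) $\eta=\{a\}$, $\varepsilon=\{b\}$, $\tilde\mu(a,a)=\{a\}$, $\tilde\mu(a,b)=\tilde\mu(b,a)=\{b\}$, $\tilde\mu(b,b)=\{a\}$; (4) $\eta=\{a\}$, $\varepsilon=\{b\}$, $\tilde\mu(a,a)=\{a\}$, $\tilde\mu(a,b)=\tilde\mu(b,a)=\{b\}$, $\tilde\mu(b,b)=\emptyset$; (5) $\eta=\{a,b\}$, $\varepsilon=\{a,b\}$, $\tilde\mu(a,a)=\{a\}$, $\tilde\mu(b,b)=\{b\}$, $\tilde\mu(a,b)=\tilde\mu(b,a)=\emptyset$.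
   Context: $\mathbf{Rel}$ is the monoidal category whose objects are sets, morphisms $X\to Y$ are relations $R\subseteq X\times Y$, composition is $S\circ R=\{(x,z):\exists y,(x,y)\in R,(y,z)\in S\}$, identities are diagonals, the monoidal product is the Cartesian product and the unit is $\{\bullet\}$. A relation $R\subseteq X\times Y$ is identified with $\tilde R:X\to\mathcal{P}(Y)$, $\tilde R(x)=\{y:(x,y)\in R\}$. A Frobenius object in $\mathbf{Rel}$ is a set $X$ with unit $\eta\subseteq X$ (relation $\{\bullet\}\to X$), counit $\varepsilon\subseteq X$ (relation $X\to\{\bullet\}$) and multiplication $\mu\subseteq X\times X\times X$ (relation $X\times X\to X$, described by $\tilde\mu:X\times X\to\mathcal{P}(X)$) satisfying unitality $\mu\circ(\mathbf{1}\times\eta)=\mu\circ(\eta\times\mathbf{1})=\mathbf{1}$, associativity $\mu\circ(\mathbf{1}\times\mu)=\mu\circ(\mu\times\mathbf{1})$, and nondegeneracy: there exists a relation $\beta:\{\bullet\}\to X\times X$ with $(\varepsilon\times\mathbf{1})\circ(\mu\times\mathbf{1})\circ(\mathbf{1}\times\beta)=(\mathbf{1}\times\varepsilon)\circ(\mathbf{1}\times\mu)\circ(\beta\times\mathbf{1})=\mathbf{1}$. An isomorphism between Frobenius objects $(X,\eta,\varepsilon,\tilde\mu)$ and $(X',\eta',\varepsilon',\tilde\mu')$ is a bijection $f:X\to X'$ with $f(\eta)=\eta'$, $f(\varepsilon)=\varepsilon'$ and $\tilde\mu'(f(x),f(y))=f(\tilde\mu(x,y))$ for all $x,y\in X$.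 *)

From Stdlib Require Import Arith.

(* Data of a candidate Frobenius object on a set X:
   - fr_unit  : the relation eta : {*} -> X, i.e. a subset of X
   - fr_counit: the relation epsilon : X -> {*}, i.e. a subset of X
   - fr_mult x y z  means  z \in mu~(x,y)  (relation X x X -> X). *)
Record FrobData (X : Type) := {
  fr_unit : X -> Prop;
  fr_counit : X -> Prop;
  fr_mult : X -> X -> X -> Prop }.

Arguments fr_unit {X} _ _.
Arguments fr_counit {X} _ _.
Arguments fr_mult {X} _ _ _ _.

(* mu o (1 x eta) = 1  and  mu o (eta x 1) = 1 *)
Definition unitality {X : Type} (F : FrobData X) : Prop :=
  (forall x z, (exists e, fr_unit F e /\ fr_mult F x e z) <-> x = z) /\
  (forall x z, (exists e, fr_unit F e /\ fr_mult F e x z) <-> x = z).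

(* mu o (1 x mu) = mu o (mu x 1), as relations X x X x X -> X *)
Definition associativity {X : Type} (F : FrobData X) : Prop :=
  forall x y z w,
    (exists u, fr_mult F y z u /\ fr_mult F x u w) <->
    (exists u, fr_mult F x y u /\ fr_mult F u z w).

(* exists beta : {*} -> X x X with
   (eps x 1) o (mu x 1) o (1 x beta) = 1  and  (1 x eps) o (1 x mu) o (beta x 1) = 1 *)
Definition nondegeneracy {X : Type} (F : FrobData X) : Prop :=
  exists beta : X -> X -> Prop,
    (forall x z,
        (exists y w, beta y z /\ fr_mult F x y w /\ fr_counit F w) <-> x = z) /\
    (forall x y,
        (exists z w, beta y z /\ fr_mult F z x w /\ fr_counit F w) <-> x = y).

Definition is_frobenius {X : Type} (F : FrobData X) : Prop :=
  unitality F /\ associativity F /\ nondegeneracy F.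

Definition is_bijection {X Y : Type} (f : X -> Y) : Prop :=
  exists g : Y -> X, (forall x, g (f x) = x) /\ (forall y, f (g y) = y).

Definition frob_iso {X Y : Type} (F : FrobData X) (G : FrobData Y) : Prop :=
  exists f : X -> Y, is_bijection f /\
    (forall y, fr_unit G y <-> exists x, fr_unit F x /\ f x = y) /\
    (forall y, fr_counit G y <-> exists x, fr_counit F x /\ f x = y) /\
    (forall x1 x2 y, fr_mult G (f x1) (f x2) y <->
                     exists x, fr_mult F x1 x2 x /\ f x = y).

Definition two_element_set (X : Type) : Prop :=
  exists a b : X, a <> b /\ forall x : X, x = a \/ x = b.

Inductive AB : Type := a | b.

Definition mult1 (x y z : AB) : Prop :=
  match x, y with
  | a, a => z = a | a, b => z = b | b, a => z = b | b, b => z = a end.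
Definition mult2 (x y z : AB) : Prop :=
  match x, y with
  | a, a => z = a | a, b => z = b | b, a => z = b | b, b => z = a \/ z = b end.
Definition mult4 (x y z : AB) : Prop :=
  match x, y with
  | a, a => z = a | a, b => z = b | b, a => z = b | b, b => False end.
Definition mult5 (x y z : AB) : Prop :=
  match x, y with
  | a, a => z = a | b, b => z = b | a, b => False | b, a => False end.

Definition model (i : nat) : FrobData AB :=
  match i with
  | 1 => {| fr_unit := fun z => z = a; fr_counit := fun z => z = a; fr_mult := mult1 |}
  | 2 => {| fr_unit := fun z => z = a; fr_counit := fun z => z = a; fr_mult := mult2 |}
  | 3 => {| fr_unit := fun z => z = a; fr_counit := fun z => z = b; fr_mult := mult1 |}
  | 4 => {| fr_unit := fun z => z = a; fr_counit := fun z => z = b; fr_mult := mult4 |}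
  | _ => {| fr_unit := fun z => z = a \/ z = b; fr_counit := fun z => z = a \/ z = b;
            fr_mult := mult5 |}
  end.

(* Nondegeneracy says exactly that the pairing (x, y) |-> eps(mu(x, y)), read as a relation
   X -> X, is invertible in Rel, hence the graph of a bijection.  Unitality makes mu trivial on
   the rows and columns of the unit, and two distinct units e, e' give mu(e, e') = {}.
   On X = {e, o}: if both points are units, mu is the diagonal and eps = X (model 5).  Otherwise
   the unit is {e}, eps is the image of e under the pairing bijection, hence a singleton:
   for eps = {e} the pairing forces e in mu(o, o) and leaves o in mu(o, o) free (models 1, 2);
   for eps = {o} it forbids o in mu(o, o) and leaves e in mu(o, o) free (models 3, 4).
   The five models are distinct because the only bijections of {a, b} are the identity and
   the swap, and neither maps one model's data onto another's. *)

From Stdlib Require Import Arith Lia Setoid Classical ClassicalEpsilon.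

Definition bijective_rel {X Y : Type} (R : X -> Y -> Prop) : Prop :=
  (forall x, exists y, R x y) /\
  (forall x y1 y2, R x y1 -> R x y2 -> y1 = y2) /\
  (forall x1 x2 y, R x1 y -> R x2 y -> x1 = x2).

Lemma invertible_rel_bijective {X Y : Type} (R : X -> Y -> Prop) (S : Y -> X -> Prop) :
  (forall x x', (exists y, R x y /\ S y x') <-> x = x') ->
  (forall y y', (exists x, S y x /\ R x y') <-> y = y') ->
  bijective_rel R.
Proof.
  intros SR RS.
  assert (back : forall x, exists y, R x y /\ S y x) by (intro x; apply SR; reflexivity).
  assert (functional : forall x y1 y2, R x y1 -> R x y2 -> y1 = y2).
  { intros x y1 y2 R1 R2; destruct (back x) as [y [Rxy Syx]].
    transitivity y; [symmetry |]; apply RS; eauto. }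
  split; [| split; [exact functional |]].
  - intro x; destruct (back x) as [y [Rxy _]]; eauto.
  - intros x1 x2 y R1 R2; destruct (back x1) as [y' [Ry' Sy']].
    rewrite (functional x1 y' y Ry' R1) in Sy'.
    symmetry; apply SR; eauto.
Qed.

Definition frob_pairing {X : Type} (F : FrobData X) (x y : X) : Prop :=
  exists w, fr_mult F x y w /\ fr_counit F w.

Lemma nondegenerate_pairing_bijective {X : Type} (F : FrobData X) :
  nondegeneracy F -> bijective_rel (frob_pairing F).
Proof.
  intros [beta [B1 B2]].
  apply (invertible_rel_bijective _ beta).
  - intros x z; rewrite <- B1; unfold frob_pairing; firstorder.
  - intros y y'; split.
    + intros [x [Byx [w [Mxw Cw]]]]; symmetry; apply B2; eauto.
    + intros <-; destruct (proj2 (B2 y y) eq_refl) as [x [w Hxw]].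
      unfold frob_pairing; firstorder.
Qed.

Section Unitality.
Variables (X : Type) (F : FrobData X).
Hypothesis unitalF : unitality F.

Lemma unit_inhabited (x : X) : exists e, fr_unit F e.
Proof. destruct (proj2 (proj1 unitalF x x) eq_refl) as [e [Ue _]]; eauto. Qed.

Lemma mult_unit_r e x z : fr_unit F e -> fr_mult F x e z -> x = z.
Proof. intros Ue Mxez; apply (proj1 unitalF); eauto. Qed.

Lemma mult_unit_l e x z : fr_unit F e -> fr_mult F e x z -> x = z.
Proof. intros Ue Mexz; apply (proj2 unitalF); eauto. Qed.

Lemma all_units_mult x y z :
  (forall u, fr_unit F u) -> fr_mult F x y z <-> x = z /\ y = z.
Proof.
  intros allU; split.
  - intros Mxyz; split; [apply (mult_unit_r y) | apply (mult_unit_l x)]; auto.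
  - intros [-> ->]; destruct (proj2 (proj1 unitalF z z) eq_refl) as [u [_ Mzu]].
    assert (u = z) as -> by (apply (mult_unit_l z); auto); exact Mzu.
Qed.

Section UniqueUnit.
Variable e : X.
Hypothesis unitE : forall u, fr_unit F u <-> u = e.

Lemma mult_unique_unit_l x z : fr_mult F e x z <-> x = z.
Proof.
  split; [apply mult_unit_l, unitE; reflexivity |].
  intros <-; destruct (proj2 (proj2 unitalF x x) eq_refl) as [u [Uu Mux]].
  rewrite unitE in Uu; subst u; exact Mux.
Qed.

Lemma mult_unique_unit_r x z : fr_mult F x e z <-> x = z.
Proof.
  split; [apply mult_unit_r, unitE; reflexivity |].
  intros <-; destruct (proj2 (proj1 unitalF x x) eq_refl) as [u [Uu Mxu]].
  rewrite unitE in Uu; subst u; exact Mxu.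
Qed.

Lemma pairing_unique_unit y : frob_pairing F e y <-> fr_counit F y.
Proof.
  unfold frob_pairing; setoid_rewrite mult_unique_unit_l.
  split; [intros [w [<- Cy]] | intros Cy; exists y]; auto.
Qed.

End UniqueUnit.
End Unitality.

Section Frobenius.
Variables (X : Type) (F : FrobData X).
Hypothesis frobF : is_frobenius F.

Let pairingF : bijective_rel (frob_pairing F) :=
  nondegenerate_pairing_bijective F (proj2 (proj2 frobF)).

Lemma unique_unit_counit_singleton e :
  (forall u, fr_unit F u <-> u = e) -> exists c, forall y, fr_counit F y <-> y = c.
Proof.
  intros unitE; destruct pairingF as [total [functional _]].
  destruct (total e) as [c Pec]; exists c; intro y.
  rewrite <- (pairing_unique_unit X F (proj1 frobF) e unitE); split; [| intros ->]; eauto.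
Qed.

Lemma all_units_counit : (forall u, fr_unit F u) -> forall x, fr_counit F x.
Proof.
  intros allU x; destruct (proj1 pairingF x) as [y [w [Mxyw Cw]]].
  rewrite (all_units_mult X F (proj1 frobF) x y w allU) in Mxyw.
  destruct Mxyw as [-> _]; exact Cw.
Qed.

End Frobenius.

Lemma frob_iso_of_pullback {X Y : Type} (F : FrobData X) (G : FrobData Y) (g : Y -> X) :
  is_bijection g ->
  (forall y, fr_unit G y <-> fr_unit F (g y)) ->
  (forall y, fr_counit G y <-> fr_counit F (g y)) ->
  (forall y1 y2 y, fr_mult G y1 y2 y <-> fr_mult F (g y1) (g y2) (g y)) ->
  frob_iso F G.
Proof.
  intros [h [hg gh]] unitG counitG multG.
  exists h; split; [exists g; split; assumption |].
  split; [| split].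
  - intro y; rewrite unitG; split;
      [exists (g y); auto | intros [x [Ux <-]]; rewrite gh; exact Ux].
  - intro y; rewrite counitG; split;
      [exists (g y); auto | intros [x [Cx <-]]; rewrite gh; exact Cx].
  - intros x1 x2 y; rewrite multG, !gh; split;
      [exists (g y); auto | intros [x [Mx <-]]; rewrite gh; exact Mx].
Qed.

Lemma frob_iso_reflect {X Y : Type} (F : FrobData X) (G : FrobData Y) :
  frob_iso F G -> exists f : X -> Y, is_bijection f /\
    (forall x, fr_unit G (f x) <-> fr_unit F x) /\
    (forall x, fr_counit G (f x) <-> fr_counit F x) /\
    (forall x1 x2 x, fr_mult G (f x1) (f x2) (f x) <-> fr_mult F x1 x2 x).
Proof.
  intros [f [[g [gf fg]] [unitG [counitG multG]]]].
  assert (f_inj : forall x x', f x = f x' -> x = x')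
    by (intros x x' E; rewrite <- (gf x), E; apply gf).
  exists f; split; [exists g; split; assumption |].
  split; [| split].
  - intro x; rewrite unitG; split;
      [intros [x' [Ux' E]]; rewrite <- (f_inj _ _ E) | eauto]; auto.
  - intro x; rewrite counitG; split;
      [intros [x' [Cx' E]]; rewrite <- (f_inj _ _ E) | eauto]; auto.
  - intros x1 x2 x; rewrite multG; split;
      [intros [x' [Mx' E]]; rewrite <- (f_inj _ _ E) | eauto]; auto.
Qed.

Lemma ex_AB (P : AB -> Prop) : (exists x, P x) <-> P a \/ P b.
Proof. split; [intros [[|] H]; auto | intros [H | H]; eauto]. Qed.

Ltac destruct_AB := repeat match goal with y : AB |- _ => destruct y end; simpl.

Ltac decide_AB := intros; repeat setoid_rewrite ex_AB; destruct_AB; intuition congruence.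

Definition ab_swap (x : AB) : AB := match x with a => b | b => a end.

Definition ab_enum {X : Type} (e o : X) (y : AB) : X := match y with a => e | b => o end.

Lemma ab_enum_bijective {X : Type} (e o : X) :
  e <> o -> (forall x, x = e \/ x = o) -> is_bijection (ab_enum e o).
Proof.
  intros neq cover.
  exists (fun x => if excluded_middle_informative (x = e) then a else b); split.
  - intros []; simpl; destruct excluded_middle_informative; congruence.
  - intro x; destruct excluded_middle_informative; simpl; [congruence |].
    destruct (cover x); congruence.
Qed.

Lemma AB_bijection_cases (f : AB -> AB) :
  is_bijection f -> (forall x, f x = x) \/ (forall x, f x = ab_swap x).
Proof.
  intros [g [gf _]].
  destruct (f a) eqn:fa, (f b) eqn:fb;
    try (assert (a = b) by (rewrite <- (gf a), <- (gf b), fa, fb; reflexivity); discriminate);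
    [left | right]; intros []; assumption.
Qed.

Lemma models_frobenius (i : nat) : 1 <= i <= 5 -> is_frobenius (model i).
Proof.
  intros Hi; destruct i as [|[|[|[|[|[|i]]]]]]; try lia;
    (split; [split; decide_AB | split; [unfold associativity; decide_AB |]]).
  - exists (@eq AB); split; decide_AB.
  - exists (@eq AB); split; decide_AB.
  - exists (fun y z => z = ab_swap y); split; decide_AB.
  - exists (fun y z => z = ab_swap y); split; decide_AB.
  - exists (@eq AB); split; decide_AB.
Qed.

Lemma models_distinct (i j : nat) : 1 <= i <= 5 -> 1 <= j <= 5 ->
  frob_iso (model i) (model j) -> i = j.
Proof.
  intros Hi Hj iso.
  destruct (frob_iso_reflect _ _ iso) as [f [bij [unitf [counitf multf]]]].
  pose proof (unitf a); pose proof (unitf b); pose proof (counitf a); pose proof (counitf b).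
  pose proof (multf b b a); pose proof (multf b b b).
  destruct (AB_bijection_cases f bij) as [Hf | Hf]; rewrite !Hf in *;
    clear unitf counitf multf;
    destruct i as [|[|[|[|[|[|i]]]]]]; try lia; destruct j as [|[|[|[|[|[|j]]]]]]; try lia;
    simpl in *; intuition congruence.
Qed.

Section TwoElements.
Variables (X : Type) (F : FrobData X).
Hypothesis frobF : is_frobenius F.
Variables e o : X.
Hypothesis neq : e <> o.
Hypothesis cover : forall x, x = e \/ x = o.

Let pullback_iso G :=
  frob_iso_of_pullback F G (ab_enum e o) (ab_enum_bijective e o neq cover).

Lemma all_units_iso_model5 : (forall u, fr_unit F u) -> frob_iso F (model 5).
Proof.
  intros allU.
  pose proof (all_units_counit X F frobF allU) as allC.
  pose proof (allU e); pose proof (allU o); pose proof (allC e); pose proof (allC o).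
  apply pullback_iso; intros; destruct_AB;
    rewrite ?(all_units_mult X F (proj1 frobF) _ _ _ allU); intuition congruence.
Qed.

Section UniqueUnit.
Hypothesis unit_e : fr_unit F e.
Hypothesis not_unit_o : ~ fr_unit F o.

Let unitE : forall u, fr_unit F u <-> u = e.
Proof.
  intro u; split; [| intros ->; exact unit_e].
  intros Uu; destruct (cover u) as [-> | ->]; tauto.
Qed.

Let pairingF : bijective_rel (frob_pairing F) :=
  nondegenerate_pairing_bijective F (proj2 (proj2 frobF)).
Let mult_e_l := mult_unique_unit_l X F (proj1 frobF) e unitE.
Let mult_e_r := mult_unique_unit_r X F (proj1 frobF) e unitE.
Let pairing_e := pairing_unique_unit X F (proj1 frobF) e unitE.

Lemma counit_at_unit_iso_model12 :
  (forall y, fr_counit F y <-> y = e) -> frob_iso F (model 1) \/ frob_iso F (model 2).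
Proof.
  intros counitE; destruct pairingF as [total [_ injective]].
  assert (Mooe : fr_mult F o o e).
  { destruct (total o) as [y Poy].
    destruct (cover y) as [-> | ->].
    - exfalso; apply neq, (injective e o e); [apply pairing_e, counitE |]; auto.
    - destruct Poy as [w [Moow Cw]]; rewrite counitE in Cw; subst w; exact Moow. }
  destruct (classic (fr_mult F o o o)); [right | left]; apply pullback_iso;
    intros; destruct_AB; rewrite ?unitE, ?counitE, ?mult_e_l, ?mult_e_r;
    intuition congruence.
Qed.

Lemma counit_off_unit_iso_model34 :
  (forall y, fr_counit F y <-> y = o) -> frob_iso F (model 3) \/ frob_iso F (model 4).
Proof.
  intros counitE; destruct pairingF as [_ [_ injective]].
  assert (not_Mooo : ~ fr_mult F o o o).
  { intros Mooo; apply neq, (injective e o o); [apply pairing_e, counitE |]; auto.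
    exists o; rewrite counitE; auto. }
  destruct (classic (fr_mult F o o e)); [left | right]; apply pullback_iso;
    intros; destruct_AB; rewrite ?unitE, ?counitE, ?mult_e_l, ?mult_e_r;
    intuition congruence.
Qed.

Lemma unique_unit_classification : exists i, 1 <= i <= 5 /\ frob_iso F (model i).
Proof.
  destruct (unique_unit_counit_singleton X F frobF e unitE) as [c counitC].
  destruct (cover c) as [-> | ->].
  - destruct (counit_at_unit_iso_model12 counitC); [exists 1 | exists 2];
      (split; [lia | assumption]).
  - destruct (counit_off_unit_iso_model34 counitC); [exists 3 | exists 4];
      (split; [lia | assumption]).
Qed.

End UniqueUnit.
End TwoElements.

Theorem theorem5p1 :
  (forall i : nat, 1 <= i <= 5 -> is_frobenius (model i)) /\
  (forall i j : nat, 1 <= i <= 5 -> 1 <= j <= 5 ->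
     frob_iso (model i) (model j) -> i = j) /\
  (forall (X : Type) (F : FrobData X), two_element_set X -> is_frobenius F ->
     exists i : nat, 1 <= i <= 5 /\ frob_iso F (model i)).
Proof.
  split; [exact models_frobenius | split; [exact models_distinct |]].
  intros X F [p [q [neq cover]]] frobF.
  assert (cover' : forall x, x = q \/ x = p) by (intro x; destruct (cover x); auto).
  destruct (classic (fr_unit F p)) as [Up | Up], (classic (fr_unit F q)) as [Uq | Uq].
  - exists 5; split; [lia |].
    apply (all_units_iso_model5 X F frobF p q neq cover).
    intro u; destruct (cover u) as [-> | ->]; assumption.
  - exact (unique_unit_classification X F frobF p q neq cover Up Uq).
  - exact (unique_unit_classification X F frobF q p (not_eq_sym neq) cover' Uq Up).
  - destruct (unit_inhabited X F (proj1 frobF) p) as [u Uu].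
    destruct (cover u) as [-> | ->]; contradiction.
Qed.
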